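(* For all positive integers $n$ and $k$ with $k\le 2^n$, we have $v_2\big(H(2^n,k)\big)\le -n$.
   Context: For positive integers $N\ge k$, $H(N,k)=\sum_{1\le i_1<\cdots<i_k\le N}\frac{1}{i_1\cdots i_k}$ is the $k$-th elementary symmetric function of $1,\frac12,\dots,\frac1N$. For a nonzero rational $x=n_1/n_2$ with integers $n_1,n_2$, $v_2(x)=v_2(n_1)-v_2(n_2)$, where $v_2$ is the $2$-adic valuation. *)

From HB Require Import structures.
From mathcomp Require Import all_boot all_order all_algebra.
Set Implicit Arguments. Unset Strict Implicit. Unset Printing Implicit Defensive.
Import Order.TTheory GRing.Theory Num.Theory.
Local Open Scope ring_scope.

(* H(N,k) = sum over k-subsets {i_1<...<i_k} of {1..N} of 1/(i_1...i_k).
   Index i : 'I_N represents the integer i+1. *)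
Definition H (N k : nat) : rat :=
  \sum_(A : {set 'I_N} | #|A| == k) \prod_(i in A) ((i.+1)%:R)^-1.

(* 2-adic valuation of a rational x = numq x / denq x (reduced form):
   v_2(x) = v_2(numq x) - v_2(denq x). Meaningful for x <> 0. *)
Definition v2 (x : rat) : int :=
  (logn 2 `|numq x|%N)%:Z - (logn 2 `|denq x|%N)%:Z.

(* H(N, k) is the coefficient of X^k in \prod_(1 <= i <= N) (1 + X / i), i.e. the
   quotient of the coefficients of X^k and X^0 in D(X) = \prod_(1 <= i <= N) (X + i).
   For N = 2^(p+1), pairing i with N - i gives D(X) = (X + N)(X + N/2) S(X (X + N))
   with S(Y) = \prod_(0 < i < 2^p) (Y + i (N - i)).
   The 2-adic valuation of the coefficient of Y^s in S is computed exactly by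
   induction on p: splitting the roots of S for 2^(p+1) by the parity of i gives
   a rescaled S for 2^p times a product congruent to (Y - 1)^(2^p) modulo 2^(p+1),
   whose coefficients have valuation p - v_2(b) by Kummer's theorem, and in the
   resulting convolution a single term has strictly smaller valuation than all the
   others. The answer is 2^(p+1) + tau s - 2(p+1)(s+1) for an explicit tau with
   tau s <= 2(p+1)s; the coefficient of X^k in D is then dominated by the
   coefficient of Y^((k-1)/2) in S, which gives the bound. *)

From HB Require Import structures.
From mathcomp Require Import all_boot all_order all_algebra.
From mathcomp Require Import zify ring.
Import Order.TTheory GRing.Theory Num.Theory.
Local Open Scope ring_scope.
Set Implicit Arguments. Unset Strict Implicit. Unset Printing Implicit Defensive.

Definition zlogn (p : nat) (x : int) : nat := logn p `|x|.

Definition has_val (p e : nat) (x : int) : Prop := x != 0 /\ zlogn p x = e.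

Section Valuation.

Variable p : nat.
Hypothesis p_prime : prime p.

Lemma dvdz_exp_zlogn e x : x != 0 -> ((p ^ e)%:Z %| x)%Z = (e <= zlogn p x)%N.
Proof. by move=> x0; rewrite dvdzE /= -pfactor_dvdn // absz_gt0. Qed.

Lemma dvdz_expW e f x : (e <= f)%N -> ((p ^ f)%:Z %| x)%Z -> ((p ^ e)%:Z %| x)%Z.
Proof. by move=> le_ef; apply: dvdz_trans; rewrite dvdzE dvdn_exp2l. Qed.

Lemma dvdz_expM e f x y : ((p ^ e)%:Z %| x)%Z -> ((p ^ f)%:Z %| y)%Z ->
  ((p ^ (e + f))%:Z %| x * y)%Z.
Proof. by rewrite expnD PoszM; apply: dvdz_mul. Qed.

Lemma dvdz_exp_val e f x : has_val p e x -> (f <= e)%N -> ((p ^ f)%:Z %| x)%Z.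
Proof. by case=> x0 vx le_fe; rewrite dvdz_exp_zlogn // vx. Qed.

Lemma has_valM e f x y : has_val p e x -> has_val p f y -> has_val p (e + f) (x * y).
Proof.
case=> x0 <- [y0 <-]; split; first by rewrite mulf_neq0.
by rewrite /zlogn abszM lognM // absz_gt0.
Qed.

Lemma has_valX e x k : has_val p e x -> has_val p (e * k) (x ^+ k).
Proof.
move=> vx; elim: k => [|k IH]; first by split; rewrite ?oner_eq0 // muln0 /zlogn logn1.
by rewrite exprS mulnS; apply: has_valM.
Qed.

Lemma has_valN e x : has_val p e (- x) <-> has_val p e x.
Proof. by rewrite /has_val /zlogn abszN oppr_eq0. Qed.

Lemma has_val_Ndvdz e x : has_val p e x -> ~~ ((p ^ e.+1)%:Z %| x)%Z.
Proof. by case=> x0 vx; rewrite dvdz_exp_zlogn // vx ltnn. Qed.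

Lemma has_valD e x y :
  has_val p e x -> ((p ^ e.+1)%:Z %| y)%Z -> has_val p e (x + y).
Proof.
move=> vx dvd_y; have xN := has_val_Ndvdz vx.
have xy0 : x + y != 0.
  by apply/eqP => xy0; move: xN; rewrite -(addrK y x) xy0 sub0r rpredN dvd_y.
have xy_e : ((p ^ e)%:Z %| x + y)%Z.
  by rewrite rpredD ?(dvdz_exp_val vx) ?(dvdz_expW (leqnSn e) dvd_y).
split=> //; apply/eqP; rewrite eqn_leq -dvdz_exp_zlogn // xy_e andbT leqNgt.
rewrite -dvdz_exp_zlogn //; apply: contra xN => dvd_xy.
by rewrite -(addrK y x) rpredB.
Qed.

Lemma has_val_sum (I : finType) (F : I -> int) j e :
  has_val p e (F j) -> (forall i, i != j -> ((p ^ e.+1)%:Z %| F i)%Z) ->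
  has_val p e (\sum_i F i).
Proof.
move=> vj dvd_others; rewrite (bigD1 j) //=; apply: has_valD vj _.
by apply: rpred_sum => i; apply: dvd_others.
Qed.

Lemma has_val_nat n : (0 < n)%N -> has_val p (logn p n) n%:Z.
Proof. by move=> n_gt0; split; rewrite // eqz_nat -lt0n. Qed.

Lemma logn_lt_exp k b : (0 < b < p ^ k)%N -> (logn p b < k)%N.
Proof.
case/andP=> b_gt0 b_lt; rewrite -(ltn_exp2l _ _ (prime_gt1 p_prime)).
exact: leq_ltn_trans (dvdn_leq b_gt0 (pfactor_dvdnn p b)) b_lt.
Qed.

Lemma logn_expD k b : (0 < b < p ^ k)%N -> logn p (p ^ k + b) = logn p b.
Proof.
move=> b_bound; have b_gt0 : (0 < b)%N by case/andP: b_bound.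
have dvd_pk : ((p ^ (logn p b).+1)%:Z %| (p ^ k)%N%:Z)%Z.
  by rewrite dvdzE dvdn_exp2l // logn_lt_exp.
by have [_ <-] := has_valD (has_val_nat b_gt0) dvd_pk; rewrite -PoszD addnC.
Qed.

Lemma logn_expB k d : (0 < d < p ^ k)%N -> logn p (p ^ k - d) = logn p d.
Proof.
move=> d_bound; have d_gt0 : (0 < d)%N by case/andP: d_bound.
have dvd_pk : ((p ^ (logn p d).+1)%:Z %| (p ^ k)%N%:Z)%Z.
  by rewrite dvdzE dvdn_exp2l // logn_lt_exp.
have /has_valN vNd := has_val_nat d_gt0.
have [_ <-] := has_valD vNd dvd_pk.
by rewrite addrC subzn //; case/andP: d_bound => _ /ltnW.
Qed.

End Valuation.

Section BinomialPow2.
Local Open Scope nat_scope.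

Lemma bin_pow2_even k j : 0 < j < 2 ^ k -> ~~ odd 'C(2 ^ k, j).
Proof.
case: j => [|j] // /andP [_ j_lt]; apply/negP => odd_bin.
have : 2 ^ k %| j.+1 * 'C(2 ^ k, j.+1).
  by rewrite -mul_bin_diag dvdn_mulr.
rewrite Gauss_dvdl; last by rewrite coprimeXl // coprime2n.
by move/dvdn_leq => /(_ isT); rewrite leqNgt j_lt.
Qed.

Lemma bin_pow2_pred_odd k i : i < 2 ^ k -> odd 'C(2 ^ k - 1, i).
Proof.
elim: i => [|i IH] i_lt; first by rewrite bin0.
have := @bin_pow2_even k i.+1; rewrite i_lt => /(_ isT).
rewrite -[in 'C(2 ^ k, _)](subnK (expn_gt0 2 k)) addn1 binS oddD IH ?(ltnW i_lt) //.
by rewrite addbT negbK.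
Qed.

Lemma logn2_bin_pow2 k b : 0 < b <= 2 ^ k -> logn 2 b + logn 2 'C(2 ^ k, b) = k.
Proof.
case: b => [|b] // /andP [_ b_le].
have odd_bin := bin_pow2_pred_odd b_le.
rewrite -lognM ?bin_gt0 // -mul_bin_diag -subn1 lognM ?expn_gt0 ?(odd_gt0 odd_bin) //.
have -> : logn 2 'C(2 ^ k - 1, b) = 0 by apply: logn_coprime; rewrite coprime2n.
by rewrite pfactorK // addn0.
Qed.

End BinomialPow2.

Lemma pfactor_logn_leq p m : (0 < m)%N -> (p ^ logn p m <= m)%N.
Proof. by move=> m_gt0; apply: dvdn_leq m_gt0 (pfactor_dvdnn _ _). Qed.

Section TruncLog.
Local Open Scope nat_scope.

Variable p : nat.
Hypothesis p_gt1 : 1 < p.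

Lemma logn_le_trunc_log m : 0 < m -> logn p m <= trunc_log p m.
Proof. by move=> m_gt0; apply: trunc_log_max => //; apply: pfactor_logn_leq. Qed.

Lemma trunc_log_lt_exp k m : 0 < m < p ^ k -> trunc_log p m < k.
Proof.
case/andP=> m_gt0 m_lt; rewrite -(ltn_exp2l _ _ p_gt1).
exact: leq_ltn_trans (trunc_logP p_gt1 m_gt0) m_lt.
Qed.

End TruncLog.

Section Tau.
Local Open Scope nat_scope.
Local Notation lg := (trunc_log 2).

(* The closed form of [\sum_(1 <= j < m) (2 * lg j + 4)]. *)
Definition lgsum (m : nat) : nat := (2 * lg m + 4) * m - 4 * 2 ^ lg m.

Definition tau (s : nat) : nat := lgsum s.+1 + (lg s.+1 - logn 2 s.+1).

Lemma lgsumS m : 0 < m -> lgsum m.+1 = lgsum m + 2 * lg m + 4.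
Proof.
move=> m_gt0; rewrite /lgsum.
have lb := trunc_logP (isT : 1 < 2) m_gt0; have ub := trunc_log_ltn m (isT : 1 < 2).
have [m1_pow|m1_npow] := eqVneq m.+1 (2 ^ (lg m).+1).
  rewrite m1_pow trunc_expnK // -m1_pow; move: m1_pow; rewrite expnS.
  set L := lg m; set x := 2 ^ L => m1_pow; nia.
have -> : lg m.+1 = lg m.
  apply: trunc_log_eq => //; rewrite (leq_trans lb) //= ltn_neqAle m1_npow.
  exact: ub.
move: lb; set L := lg m; set x := 2 ^ L => lb; nia.
Qed.

Lemma lgsum_addn m d : 0 < m -> lgsum (m + d) <= lgsum m + d * (2 * lg (m + d).-1 + 4).
Proof.
move=> m_gt0; elim: d => [|d IH]; first by rewrite addn0 mul0n addn0.
rewrite addnS lgsumS ?addn_gt0 ?m_gt0 // -pred_Sn.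
have lg_le : lg (m + d).-1 <= lg (m + d) by apply: leq_trunc_log; rewrite leq_pred.
have : d * lg (m + d).-1 <= d * lg (m + d) by rewrite leq_mul2l lg_le orbT.
lia.
Qed.

Lemma tau0 : tau 0 = 0.
Proof. by rewrite /tau /lgsum trunc_log1. Qed.

Lemma tauS s : tau s + lg s.+1 + 4 <= tau s.+1.
Proof. by rewrite /tau (@lgsumS s.+1) //; lia. Qed.

Lemma tau_incr s t : s <= t -> tau s + 4 * (t - s) <= tau t.
Proof.
move=> /subnK <-; rewrite addnK; elim: (t - s) => [|d IH]; first by rewrite add0n muln0 addn0.
by have := tauS (d + s); rewrite addSn; lia.
Qed.

Lemma tau_pow2_pred k : tau (2 ^ k - 1) = 2 * k * 2 ^ k.
Proof.
rewrite /tau subn1 prednK ?expn_gt0 // /lgsum trunc_expnK // pfactorK // subnn addn0.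
lia.
Qed.

Lemma tau_le s n : s < 2 ^ n -> tau s <= 2 * n.+1 * s.
Proof.
move=> s_lt; rewrite /tau /lgsum.
have lb := trunc_logP (isT : 1 < 2) (ltn0Sn s).
have dev := leq_subr (logn 2 s.+1) (lg s.+1).
have [s1_lt|s1_ge] := ltnP s.+1 (2 ^ n).
  have lg_lt : lg s.+1 < n by apply: trunc_log_lt_exp; rewrite ?s1_lt.
  have lg_exp := ltn_expl (lg s.+1) (isT : 1 < 2).
  move: lb lg_exp lg_lt dev; set J := lg s.+1; set x := 2 ^ J => lb lg_exp lg_lt dev.
  have h1 : (2 * n - 2 * J - 2) * x <= (2 * n - 2 * J - 2) * s.+1 by apply: leq_mul.
  have h2 : (2 * n - 2 * J) * J.+1 <= (2 * n - 2 * J) * x by apply: leq_mul.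
  nia.
have s1_eq : s.+1 = 2 ^ n by apply/eqP; rewrite eqn_leq s_lt s1_ge.
rewrite s1_eq trunc_expnK // pfactorK // subnn addn0.
have := ltn_expl n (isT : 1 < 2); move: s1_eq; set x := 2 ^ n => s1_eq ?.
nia.
Qed.

Lemma tau_lt_low p s b : s < 2 ^ p -> 0 < b <= s ->
  tau s < tau (s - b) + 2 * (p + 2) * b + (p - logn 2 b).
Proof.
move=> s_lt /andP [b_gt0 b_le].
have s1_split : s.+1 = (s - b).+1 + b by lia.
have := lgsum_addn b (ltn0Sn (s - b)); rewrite -s1_split /= => slope.
have lg_s : lg s < p by apply: trunc_log_lt_exp => //; rewrite s_lt andbT; lia.
have lg_s1 : lg s.+1 <= p.
  by rewrite -ltnS; apply: trunc_log_lt_exp => //; rewrite expnS; lia.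
have : b * (lg s).+1 <= b * p by rewrite leq_mul2l lg_s orbT.
have vb_lt : logn 2 b < b.
  exact: leq_trans (ltn_expl _ (isT : 1 < 2)) (pfactor_logn_leq 2 b_gt0).
have : logn 2 b <= p.
  by have := logn_le_trunc_log (isT : 1 < 2) b_gt0; have := leq_trunc_log 2 b_le; lia.
have := leq_subr (logn 2 s.+1) (lg s.+1); rewrite /tau; lia.
Qed.

Lemma tau_pow2_pred_addn p b : 0 < b <= 2 ^ p ->
  tau (2 ^ p - 1 + b) = tau (2 ^ p - 1) + 2 * (p + 2) * b + (p - logn 2 b).
Proof.
move=> /andP [b_gt0 b_le]; rewrite tau_pow2_pred /tau.
have -> : (2 ^ p - 1 + b).+1 = 2 ^ p + b by have := expn_gt0 2 p; lia.
have [b_lt|b_ge] := ltnP b (2 ^ p).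
  have lg_eq : lg (2 ^ p + b) = p by apply: trunc_log_eq; rewrite // expnS; lia.
  have vb_lt : logn 2 b < p by apply: logn_lt_exp; rewrite ?b_gt0.
  rewrite /lgsum lg_eq logn_expD ?b_gt0 //; nia.
have -> : b = 2 ^ p by apply/eqP; rewrite eqn_leq b_le b_ge.
rewrite addnn -mul2n -expnS /lgsum trunc_expnK // !pfactorK // subnn addn0 expnS.
nia.
Qed.

Lemma tau_lt_high p a b : a < 2 ^ p - 1 -> 2 ^ p - 1 < a + b -> b <= 2 ^ p ->
  tau (a + b) < tau a + 2 * (p + 2) * b + (p - logn 2 b).
Proof.
move=> a_lt ab_gt b_le; have pow_gt0 := expn_gt0 2 p.
have [q p_eq] : exists q, p = q.+1 by case: p a_lt {ab_gt b_le pow_gt0} => [|q]; [|exists q].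
set d := 2 ^ p - 1 - a; set b0 := a + b - (2 ^ p - 1).
have b0_bound : 0 < b0 <= 2 ^ p by rewrite /b0; lia.
have d_bound : 0 < d < 2 ^ p by rewrite /d; lia.
have -> : a + b = 2 ^ p - 1 + b0 by rewrite /b0; lia.
rewrite tau_pow2_pred_addn //.
have := lgsum_addn d (ltn0Sn a); have -> : a.+1 + d = 2 ^ p by rewrite /d; lia.
have -> : lg (2 ^ p).-1 = q.
  by apply: trunc_log_eq => //; have := expn_gt0 2 q; rewrite p_eq expnS; lia.
move=> slope.
have tau_pow : tau (2 ^ p - 1) = lgsum (2 ^ p).
  by rewrite /tau subn1 prednK // trunc_expnK // pfactorK // subnn addn0.
have vb0 : logn 2 b0 <= p.
  have := logn_le_trunc_log (isT : 1 < 2) (proj1 (andP b0_bound)).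
  by have := leq_trunc_log 2 (proj2 (andP b0_bound)); rewrite trunc_expnK //; lia.
have gap : p < 2 * d + (lg a.+1 - logn 2 a.+1).
  have [d_big|d_small] := ltnP (2 ^ p) (2 * d).
    by have := ltn_expl p (isT : 1 < 2); lia.
  have lg_a : q <= lg a.+1.
    by apply: trunc_log_max => //; move: d_small; rewrite /d p_eq expnS; lia.
  have va : logn 2 a.+1 = logn 2 d.
    by rewrite -(logn_expB (isT : prime 2) d_bound); congr logn; rewrite /d; lia.
  have := pfactor_logn_leq 2 (proj1 (andP d_bound)).
  have := ltn_expl (logn 2 d) (isT : 1 < 2).
  rewrite va; lia.
have -> : b = b0 + d by rewrite /b0 /d; lia.
rewrite tau_pow /tau; lia.
Qed.

End Tau.

Section CoefProdXaddC.
Variable R : comNzRingType.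

Lemma coef_XaddC_exp (c : R) n i : (('X + c%:P) ^+ n)`_i = c ^+ (n - i) *+ 'C(n, i).
Proof.
elim: n i => [|n IH] [|i] /=.
- by rewrite expr0 coef1 expr0 mulr1n.
- by rewrite expr0 coef1 bin0n.
- by rewrite exprSr mulrDr coefD coefMX coefMC IH add0r !bin0 !subn0 exprSr.
rewrite exprSr mulrDr coefD coefMX coefMC !IH subSS binS mulrnDr addrC.
congr (_ + _); have [i_lt|i_ge] := ltnP i n; first by rewrite mulrnAl -exprSr subnSK.
by rewrite !bin_small ?mulr0n ?mul0r // ltnS.
Qed.

Lemma size_prod_XaddC I (r : seq I) (d : I -> R) :
  size (\prod_(l <- r) ('X + (d l)%:P)) = (size r).+1.
Proof.
rewrite (eq_bigr (fun l => 'X - (- d l)%:P)) ?size_prod_XsubC // => l _.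
by rewrite polyCN opprK.
Qed.

Lemma coef_prod_XaddC_big I (r : seq I) (d : I -> R) (a : nat) :
  (size r < a)%N -> (\prod_(l <- r) ('X + (d l)%:P))`_a = 0.
Proof. by move=> r_lt; rewrite nth_default // size_prod_XaddC. Qed.

Lemma coef_prod_XaddC_scale I (r : seq I) (w : I -> R) (c : R) a : (a <= size r)%N ->
  (\prod_(l <- r) ('X + (c * w l)%:P))`_a =
    c ^+ (size r - a) * (\prod_(l <- r) ('X + (w l)%:P))`_a.
Proof.
elim: r a => [|x r IH] a /=.
  by rewrite leqn0 => /eqP ->; rewrite !big_nil expr0 mul1r.
rewrite !big_cons !mulrDl !coefD !coefXM !coefCM; case: a => [|a] a_le /=.
  by rewrite !add0r IH // subn0 exprS; ring.
have [a_lt|a_ge] := ltnP a (size r).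
  by rewrite subSS (IH a) 1?ltnW // (IH a.+1 a_lt) -(subnSK a_lt) exprS; ring.
have a_eq : a = size r by apply/eqP; rewrite eqn_leq a_ge -ltnS a_le.
have big (d : I -> R) : (\prod_(l <- r) ('X + (d l)%:P))`_(size r).+1 = 0.
  exact: coef_prod_XaddC_big.
by rewrite a_eq IH // !big !subnn !expr0 !mulr0 !addr0.
Qed.

End CoefProdXaddC.

Lemma prod_nat_split_parity (R : comNzRingType) m (F : nat -> R) : (0 < m)%N ->
  \prod_(1 <= i < 2 * m) F i =
    \prod_(1 <= l < m) F (2 * l)%N * \prod_(0 <= l < m) F (2 * l + 1)%N.
Proof.
elim: m => [|[|m] IH] // _; first by rewrite muln1 big_nat1 big_geq // big_nat1 mul1r.
rewrite (_ : 2 * m.+2 = (2 * m.+1).+2)%N; last by lia.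
rewrite big_nat_recr /=; last by lia.
rewrite big_nat_recr /=; last by lia.
rewrite (big_nat_recr m.+1 1) // (big_nat_recr m.+1 0) //= IH //.
by rewrite (_ : 2 * m.+1 + 1 = (2 * m.+1).+1)%N; [ring | lia].
Qed.

Definition eqmodr (R : comNzRingType) (d x y : R) : Prop := exists z, x = y + d * z.

Section EqModR.
Variables (R : comNzRingType) (d : R).

Lemma eqmodr_refl x : eqmodr d x x.
Proof. by exists 0; rewrite mulr0 addr0. Qed.

Lemma eqmodr_trans x y z : eqmodr d x y -> eqmodr d y z -> eqmodr d x z.
Proof. by move=> [u ->] [v ->]; exists (v + u); ring. Qed.

Lemma eqmodr_mul x x' y y' : eqmodr d x x' -> eqmodr d y y' -> eqmodr d (x * y) (x' * y').
Proof. by move=> [u ->] [v ->]; exists (x' * v + u * y' + d * u * v); ring. Qed.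

Lemma eqmodr_prod I (r : seq I) (F G : I -> R) :
  (forall i, eqmodr d (F i) (G i)) -> eqmodr d (\prod_(i <- r) F i) (\prod_(i <- r) G i).
Proof.
move=> FG; elim: r => [|i r IH]; first by rewrite !big_nil; apply: eqmodr_refl.
by rewrite !big_cons; apply: eqmodr_mul.
Qed.

Lemma eqmodr_dvd c x y : eqmodr (c * d) x y -> eqmodr d x y.
Proof. by move=> [u ->]; exists (c * u); ring. Qed.

Lemma eqmodr_sqr x y : eqmodr (2 * d) x y -> eqmodr (4 * d) (x ^+ 2) (y ^+ 2).
Proof. by move=> [u ->]; exists (y * u + d * u ^+ 2); ring. Qed.

End EqModR.

Definition rising_poly (N : nat) : {poly int} := \prod_(i < N) ('X + i.+1%:R%:P).

Definition pair_poly (M : nat) : {poly int} :=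
  \prod_(1 <= i < M) ('X + (i * (2 * M - i))%:R%:P).

Definition even_pair_poly (M : nat) : {poly int} :=
  \prod_(1 <= l < M) ('X + (4 * (l * (2 * M - l)))%:R%:P).

Definition odd_pair_poly (M : nat) : {poly int} :=
  \prod_(0 <= l < M) ('X + ((2 * l + 1) * (4 * M - (2 * l + 1)))%:R%:P).

Definition odd_sqr_poly (M : nat) : {poly int} :=
  \prod_(0 <= l < M) ('X - ((2 * l + 1) ^ 2)%:R%:P).

Lemma pair_poly_double M : (0 < M)%N -> pair_poly (2 * M) = even_pair_poly M * odd_pair_poly M.
Proof.
move=> M_gt0; rewrite /pair_poly prod_nat_split_parity //.
by congr (_ * _); apply: eq_bigr => l _; congr ('X + _%:R%:P); nia.
Qed.

Lemma coef_even_pair_poly M a : (a < M)%N ->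
  (even_pair_poly M)`_a = 4 ^+ (M - 1 - a) * (pair_poly M)`_a.
Proof.
move=> a_lt; rewrite /even_pair_poly /pair_poly.
under eq_bigr => l _ do rewrite natrM.
by rewrite coef_prod_XaddC_scale size_iota //; lia.
Qed.

Lemma coef_even_pair_poly_big M a : (0 < M <= a)%N -> (even_pair_poly M)`_a = 0.
Proof. by move=> M_le; rewrite coef_prod_XaddC_big // size_iota; lia. Qed.

Lemma coef_odd_pair_poly_big M a : (M < a)%N -> (odd_pair_poly M)`_a = 0.
Proof. by move=> M_lt; rewrite coef_prod_XaddC_big // size_iota subn0. Qed.

Lemma size_pair_poly M : (0 < M)%N -> size (pair_poly M) = M.
Proof. by move=> M_gt0; rewrite size_prod_XaddC size_iota; lia. Qed.

Lemma odd_pair_poly_eqmod M : eqmodr (4 * M)%:R (odd_pair_poly M) (odd_sqr_poly M).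
Proof.
rewrite /odd_pair_poly (eq_big_nat _ _ (F2 := fun l =>
    'X - ((2 * l + 1) ^ 2)%:R%:P + (4 * M)%:R * (2 * l + 1)%:R%:P)).
  by apply: eqmodr_prod => l; exists (2 * l + 1)%:R%:P.
move=> l /andP [_ l_lt]; rewrite -[(4 * M)%:R]polyC_natr -polyCM -addrA -polyCN -polyCD.
by congr ('X + _%:P); rewrite !natz; nia.
Qed.

Lemma odd_sqr_poly_pow2 q :
  eqmodr (2 ^ q.+1)%:R (odd_sqr_poly (2 ^ q)) (('X - 1) ^+ (2 ^ q)).
Proof.
elim: q => [|q IH]; first by rewrite /odd_sqr_poly expn0 big_nat1; exists 0; rewrite mulr0 addr0.
have -> : odd_sqr_poly (2 ^ q.+1) = odd_sqr_poly (2 ^ q) *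
    \prod_(0 <= l < 2 ^ q) ('X - ((2 * (l + 2 ^ q) + 1) ^ 2)%:R%:P).
  rewrite /odd_sqr_poly expnS mul2n -addnn (big_cat_nat _ (leq_addr _ _)) //=.
  by congr (_ * _); rewrite -{1}[(2 ^ q)%N]add0n big_addn addnK.
have shift : eqmodr (2 ^ q.+2)%:R
    (\prod_(0 <= l < 2 ^ q) ('X - ((2 * (l + 2 ^ q) + 1) ^ 2)%:R%:P)) (odd_sqr_poly (2 ^ q)).
  apply: eqmodr_prod => l; exists (- (2 * l + 1 + 2 ^ q)%:R)%:P.
  rewrite -[(2 ^ q.+2)%:R]polyC_natr -polyCM -addrA -!polyCN -polyCD.
  by congr ('X + _%:P); rewrite !natz !expnS; nia.
have sqr : eqmodr (2 ^ q.+2)%:R (odd_sqr_poly (2 ^ q) ^+ 2) (('X - 1) ^+ (2 ^ q.+1)).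
  rewrite (expnSr 2 q) exprM (_ : (2 ^ q.+2)%:R = 4 * (2 ^ q)%:R :> {poly int}).
    by apply: eqmodr_sqr; rewrite -natrM -expnS.
  by rewrite -natrM !expnS mulnA.
apply: eqmodr_trans sqr; rewrite expr2.
by apply: eqmodr_mul; [apply: eqmodr_refl | exact: shift].
Qed.

Lemma odd_pair_poly_pow2 p :
  eqmodr (2 ^ p.+1)%:R (odd_pair_poly (2 ^ p)) (('X - 1) ^+ (2 ^ p)).
Proof.
apply: eqmodr_trans (odd_sqr_poly_pow2 p); apply: (@eqmodr_dvd _ _ 2).
rewrite (_ : 2 * (2 ^ p.+1)%N%:R = (4 * 2 ^ p)%N%:R :> {poly int}).
  exact: odd_pair_poly_eqmod.
by rewrite expnS !natrM mulrA -natrM.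
Qed.

Lemma rising_poly_pair M : (0 < M)%N -> rising_poly (2 * M) =
  ('X + (2 * M)%:R%:P) * ('X + M%:R%:P) * (pair_poly M \Po ('X * ('X + (2 * M)%:R%:P))).
Proof.
move=> M_gt0; set N := (2 * M)%N.
have -> : rising_poly N = \prod_(1 <= i < N.+1) ('X + i%:R%:P) by rewrite big_add1 /= big_mkord.
rewrite (@big_cat_nat _ _ _ M) /=; [|lia|lia].
rewrite (@big_cat_nat _ _ _ M.+1 M) /=; [|lia|lia].
rewrite (@big_cat_nat _ _ _ N M.+1) /=; [|lia|lia].
rewrite !big_nat1.
have rev_half : \prod_(M.+1 <= i < N) ('X + i%:R%:P) =
    \prod_(1 <= i < M) ('X + (N - i)%:R%:P) :> {poly int}.
  rewrite big_nat_rev /= -(add1n M) big_addn.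
  rewrite (_ : N - M = M)%N; last by rewrite /N; lia.
  by apply: eq_big_nat => i /andP [? ?]; congr ('X + _%:R%:P); rewrite /N; lia.
rewrite rev_half /pair_poly rmorph_prod /=.
have pair_factor i : (1 <= i < M)%N ->
    ('X + (i * (2 * M - i))%:R%:P) \Po ('X * ('X + N%:R%:P)) =
    ('X + i%:R%:P) * ('X + (N - i)%:R%:P) :> {poly int}.
  move=> /andP [? ?]; rewrite comp_polyD comp_polyX comp_polyC.
  rewrite (_ : (i * (2 * M - i))%:R = i%:R * N%:R - i%:R * i%:R :> int); last first.
    by rewrite !natz; rewrite /N; nia.
  rewrite (_ : (N - i)%:R = N%:R - i%:R :> int); last by rewrite !natz; rewrite /N; lia.
  rewrite !polyCB !polyCM; ring.
rewrite (eq_big_nat _ _ pair_factor) big_split /=; ring.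
Qed.

Lemma has_val_sign k : has_val 2 0 ((-1) ^+ k).
Proof. by split; rewrite ?signr_eq0 // /zlogn abszX exp1n logn1. Qed.

Lemma coef_XsubC1_exp K b :
  (('X - 1) ^+ K)`_b = (-1) ^+ (K - b) * 'C(K, b)%:R :> int.
Proof. by rewrite -polyC1 -polyCN coef_XaddC_exp -mulr_natr. Qed.

Lemma coef_odd_pair_poly_eqmod p b : exists z : int,
  (odd_pair_poly (2 ^ p))`_b = (-1) ^+ (2 ^ p - b) * 'C(2 ^ p, b)%:R + (2 ^ p.+1)%:R * z.
Proof.
have [Y ->] := odd_pair_poly_pow2 p; exists Y`_b.
by rewrite coefD -polyC_natr coefCM coef_XsubC1_exp.
Qed.

Lemma coef_odd_pair_poly_val p b : (0 < b <= 2 ^ p)%N ->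
  has_val 2 (p - logn 2 b) (odd_pair_poly (2 ^ p))`_b.
Proof.
move=> b_bound; have [z ->] := coef_odd_pair_poly_eqmod p b.
apply: has_valD => //; last by rewrite natz dvdz_mulr // dvdzE dvdn_exp2l // ltnS leq_subr.
rewrite -[(p - _)%N]add0n; apply: has_valM (has_val_sign _) _.
rewrite natz -{1}(logn2_bin_pow2 b_bound) addKn.
by apply: has_val_nat; rewrite bin_gt0; case/andP: b_bound.
Qed.

Lemma coef0_odd_pair_poly_val p : has_val 2 0 (odd_pair_poly (2 ^ p))`_0.
Proof.
have [z ->] := coef_odd_pair_poly_eqmod p 0.
rewrite bin0 mulr1; apply: (has_valD _ (has_val_sign _)) => //.
by rewrite natz dvdz_mulr // dvdzE dvdn_exp2l.
Qed.

(* The subtraction does not truncate when s < 2 ^ p: this is the second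
   conjunct of coef_pair_poly_pow2_val. *)
Definition pair_val (p s : nat) : nat := 2 ^ p.+1 + tau s - 2 * p.+1 * s.+1.

Section PairPolyDouble.
Variable p : nat.
Hypothesis IH_pair_val : forall s, (s < 2 ^ p)%N ->
  has_val 2 (pair_val p s) (pair_poly (2 ^ p))`_s /\ (2 * p.+1 * s.+1 <= 2 ^ p.+1 + tau s)%N.

Local Notation E := (even_pair_poly (2 ^ p)).
Local Notation O := (odd_pair_poly (2 ^ p)).

Lemma coef_pair_poly_double s :
  (pair_poly (2 ^ p.+1))`_s = \sum_(j < s.+1) E`_j * O`_(s - j).
Proof. by rewrite expnS pair_poly_double ?expn_gt0 // coefM. Qed.

Lemma has_val_coef_even_pair j : (j < 2 ^ p)%N ->
  has_val 2 (2 * (2 ^ p - 1 - j) + pair_val p j) E`_j.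
Proof.
move=> j_lt; rewrite coef_even_pair_poly //.
have four : has_val 2 2 4 by [].
exact: has_valM (has_valX _ four) (proj1 (IH_pair_val j_lt)).
Qed.

Lemma has_val_pair_term j b : (j < 2 ^ p)%N -> (0 < b <= 2 ^ p)%N ->
  has_val 2 (2 * (2 ^ p - 1 - j) + pair_val p j + (p - logn 2 b)) (E`_j * O`_b).
Proof.
by move=> j_lt b_bound; apply: has_valM (has_val_coef_even_pair j_lt) (coef_odd_pair_poly_val b_bound).
Qed.

Lemma coef_pair_poly_double_val_low s : (s < 2 ^ p)%N ->
  has_val 2 (pair_val p.+1 s) (pair_poly (2 ^ p.+1))`_s /\
  (2 * p.+2 * s.+1 <= 2 ^ p.+2 + tau s)%N.
Proof.
move=> s_lt; have [_ nontrunc_s] := IH_pair_val s_lt.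
suff val_s : has_val 2 (pair_val p.+1 s) (pair_poly (2 ^ p.+1))`_s.
  by split=> //; rewrite !expnS in nontrunc_s *; lia.
rewrite coef_pair_poly_double; apply: (@has_val_sum 2 isT _ _ ord_max) => /=.
  rewrite subnn (_ : pair_val p.+1 s = 2 * (2 ^ p - 1 - s) + pair_val p s + 0)%N.
    exact: has_valM (has_val_coef_even_pair s_lt) (coef0_odd_pair_poly_val p).
  by rewrite /pair_val !expnS in nontrunc_s *; lia.
move=> j; rewrite -val_eqE /= => j_neq.
have j_lt : (j < s)%N by rewrite ltn_neqAle j_neq -ltnS ltn_ord.
have [_ nontrunc_j] := IH_pair_val (ltn_trans j_lt s_lt).
have b_bound : (0 < s - j <= 2 ^ p)%N by lia.
apply: dvdz_exp_val (has_val_pair_term (ltn_trans j_lt s_lt) b_bound) _ => //.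
have := @tau_lt_low p s (s - j) s_lt; rewrite subKn ?(ltnW j_lt) //.
move=> /(_ ltac:(lia)); rewrite /pair_val !expnS in nontrunc_s nontrunc_j *; lia.
Qed.

Lemma coef_pair_poly_double_val_high s : (2 ^ p <= s < 2 ^ p.+1)%N ->
  has_val 2 (pair_val p.+1 s) (pair_poly (2 ^ p.+1))`_s /\
  (2 * p.+2 * s.+1 <= 2 ^ p.+2 + tau s)%N.
Proof.
move=> /andP [s_ge s_lt]; have pow_gt0 := expn_gt0 2 p.
have top_lt : (2 ^ p - 1 < 2 ^ p)%N by lia.
have [val_top _] := IH_pair_val top_lt.
set b0 := (s - (2 ^ p - 1))%N.
have b0_bound : (0 < b0 <= 2 ^ p)%N by rewrite /b0 expnS in s_lt *; lia.
have s_eq : s = (2 ^ p - 1 + b0)%N by rewrite /b0; lia.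
have tau_s := tau_pow2_pred_addn b0_bound; rewrite -s_eq tau_pow2_pred in tau_s.
have nontrunc_s : (2 * p.+2 * s.+1 <= 2 ^ p.+2 + tau s)%N.
  by rewrite tau_s {1}s_eq !expnS; nia.
split=> //; rewrite coef_pair_poly_double.
have top_ord : (2 ^ p - 1 < s.+1)%N by lia.
apply: (@has_val_sum 2 isT _ _ (Ordinal top_ord)) => /=.
  rewrite (_ : pair_val p.+1 s = 2 * (2 ^ p - 1 - (2 ^ p - 1)) + pair_val p (2 ^ p - 1) + (p - logn 2 b0))%N.
    exact: has_val_pair_term.
  rewrite /pair_val tau_s tau_pow2_pred {1}s_eq !expnS.
  by move: pow_gt0; set x := (2 ^ p)%N; nia.
move=> [j j_ord]; rewrite -val_eqE /= => j_neq.
have [j_ge|j_lt] := leqP (2 ^ p) j.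
  by rewrite coef_even_pair_poly_big ?mul0r ?dvdz0 ?pow_gt0.
have j_lt' : (j < 2 ^ p - 1)%N by lia.
have [b_big|b_le] := ltnP (2 ^ p) (s - j).
  by rewrite coef_odd_pair_poly_big // mulr0 dvdz0.
have [_ nontrunc_j] := IH_pair_val j_lt.
have b_bound : (0 < s - j <= 2 ^ p)%N by rewrite b_le; lia.
apply: dvdz_exp_val (has_val_pair_term j_lt b_bound) _ => //.
have := @tau_lt_high p j (s - j) j_lt' ltac:(lia) b_le.
move: nontrunc_s; rewrite /pair_val (_ : s = j + (s - j))%N; last by lia.
set b := (s - j)%N; rewrite !addKn !expnS in nontrunc_j *; lia.
Qed.

End PairPolyDouble.

Lemma coef_pair_poly_pow2_val p s : (s < 2 ^ p)%N ->
  has_val 2 (pair_val p s) (pair_poly (2 ^ p))`_s /\ (2 * p.+1 * s.+1 <= 2 ^ p.+1 + tau s)%N.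
Proof.
elim: p s => [|p IHp] s s_lt.
  have -> : s = 0%N by move: s_lt; rewrite expn0; lia.
  by rewrite /pair_poly big_geq // coef1 /pair_val tau0.
have [s_lt'|s_ge] := ltnP s (2 ^ p); first exact: coef_pair_poly_double_val_low.
by apply: coef_pair_poly_double_val_high => //; rewrite s_ge.
Qed.

Lemma coef_XMXaddC_exp (R : comNzRingType) (c : R) i m :
  (('X * ('X + c%:P)) ^+ i)`_m =
    if (m < i)%N then 0 else c ^+ (i - (m - i)) *+ 'C(i, m - i).
Proof. by rewrite exprMn coefXnM coef_XaddC_exp. Qed.

Definition paired_part (p : nat) : {poly int} :=
  pair_poly (2 ^ p) \Po ('X * ('X + (2 ^ p.+1)%:R%:P)).

Lemma coef_paired_part p m : (paired_part p)`_m =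
  \sum_(i < 2 ^ p) (pair_poly (2 ^ p))`_i * (('X * ('X + (2 ^ p.+1)%:R%:P)) ^+ i)`_m.
Proof. by rewrite coef_comp_poly size_pair_poly ?expn_gt0. Qed.

(* The bound is [pair_val p i + p.+1 * (2 * i - m)], the valuation of
   the i-th summand of the coefficient, rewritten without nested subtractions. *)
Lemma dvdz_paired_term p i m L : (i < 2 ^ p)%N ->
  ((i <= m <= 2 * i)%N -> (L <= 2 ^ p.+1 + tau i - p.+1 * (m + 2))%N) ->
  ((2 ^ L)%:Z %| (pair_poly (2 ^ p))`_i * (('X * ('X + (2 ^ p.+1)%:R%:P)) ^+ i)`_m)%Z.
Proof.
move=> i_lt bound; rewrite coef_XMXaddC_exp.
have [m_lt|m_ge] := ltnP m i; first by rewrite mulr0 dvdz0.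
have [m_big|m_le] := ltnP (2 * i) m.
  by rewrite bin_small ?mulr0n ?mulr0 ?dvdz0 //; lia.
have [val_i nontrunc_i] := coef_pair_poly_pow2_val i_lt.
have := bound; rewrite m_ge m_le => /(_ isT) bound_i.
have split_m : (p.+1 * (i - (m - i)) + p.+1 * m = 2 * p.+1 * i)%N.
  by rewrite -mulnDr (_ : i - (m - i) + m = 2 * i)%N; [ring | lia].
apply: (@dvdz_expW 2 _ (pair_val p i + p.+1 * (i - (m - i)))).
  by move: split_m; rewrite /pair_val; generalize (i - (m - i))%N; lia.
apply: dvdz_expM; first exact: dvdz_exp_val val_i (leqnn _).
by rewrite -mulr_natr dvdz_mulr // -natrX natz -expnM mulnC.
Qed.

Lemma dvdz_coef_paired_part p m L :
  (forall i, (i < 2 ^ p)%N -> (i <= m <= 2 * i)%N ->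
     (L <= 2 ^ p.+1 + tau i - p.+1 * (m + 2))%N) ->
  ((2 ^ L)%:Z %| (paired_part p)`_m)%Z.
Proof.
move=> bound; rewrite coef_paired_part; apply: rpred_sum => i _.
by apply: dvdz_paired_term => //; apply: bound.
Qed.

Lemma has_val_coef_paired_part p s : (s < 2 ^ p)%N ->
  has_val 2 (pair_val p s) (paired_part p)`_(2 * s).
Proof.
move=> s_lt; have [val_s nontrunc_s] := coef_pair_poly_pow2_val s_lt.
rewrite coef_paired_part; apply: (@has_val_sum 2 isT _ _ (Ordinal s_lt)) => /=.
  rewrite coef_XMXaddC_exp ltnNge leq_pmull //= (_ : 2 * s - s = s)%N; last by lia.
  by rewrite subnn binn mulr1n expr0 mulr1.
move=> i; rewrite -val_eqE /= => i_neq; apply: dvdz_paired_term => // /andP [_ s_le].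
have s_lt_i : (s < i)%N by rewrite ltn_neqAle eq_sym i_neq; lia.
have := tau_incr (ltnW s_lt_i); rewrite /pair_val; lia.
Qed.

Lemma rising_poly_pow2 p : rising_poly (2 ^ p.+1) =
  ('X ^+ 2 + (3 * 2 ^ p)%:R%:P * 'X + (2 * 4 ^ p)%:R%:P) * paired_part p.
Proof.
rewrite [in LHS]expnS rising_poly_pair ?expn_gt0 // -expnS; congr (_ * _).
rewrite (_ : 4 ^ p = 2 ^ p * 2 ^ p)%N; last by rewrite -expnD addnn -mul2n expnM.
rewrite expnS !natrM !polyCM.
have [two three] : (2%:P = 2 :> {poly int}) /\ (3%:P = 3 :> {poly int}).
  by split; rewrite -polyC_natr.
by rewrite two three; ring.
Qed.

Lemma coef_rising_poly_pow2 p k : (rising_poly (2 ^ p.+1))`_k =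
  (if (k < 2)%N then 0 else (paired_part p)`_(k - 2)) +
  (3 * 2 ^ p)%:R * (if k is k'.+1 then (paired_part p)`_k' else 0) +
  (2 * 4 ^ p)%:R * (paired_part p)`_k.
Proof.
rewrite rising_poly_pow2 !mulrDl !coefD coefXnM -mulrA !coefCM coefXM.
by case: k.
Qed.

Lemma has_val_triple_pow2 p : has_val 2 p (3 * 2 ^ p)%:R.
Proof.
have pos : (0 < 3 * 2 ^ p)%N by rewrite muln_gt0 expn_gt0.
by rewrite natz; have := has_val_nat 2 pos; rewrite lognM ?expn_gt0 // pfactorK.
Qed.

Lemma has_val_double_pow4 p : has_val 2 (2 * p).+1 (2 * 4 ^ p)%:R.
Proof.
rewrite natz (_ : 2 * 4 ^ p = 2 ^ (2 * p).+1)%N; last by rewrite expnS expnM.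
by have := has_val_nat 2 (expn_gt0 2 (2 * p).+1); rewrite pfactorK.
Qed.

Lemma has_val_coef0_rising p : has_val 2 (2 ^ p.+1 - 1) (rising_poly (2 ^ p.+1))`_0.
Proof.
have pow_gt0 := expn_gt0 2 p.
have [_ nontrunc0] := coef_pair_poly_pow2_val pow_gt0; rewrite tau0 in nontrunc0.
rewrite coef_rising_poly_pow2 /= mulr0 !add0r (_ : 2 ^ p.+1 - 1 = (2 * p).+1 + pair_val p 0)%N.
  apply: has_valM (has_val_double_pow4 p) _.
  by have := has_val_coef_paired_part pow_gt0; rewrite muln0.
by rewrite /pair_val tau0; lia.
Qed.

Lemma has_val_coef_rising_odd p s : (s < 2 ^ p)%N ->
  has_val 2 (p + pair_val p s) (rising_poly (2 ^ p.+1))`_(2 * s).+1.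
Proof.
move=> s_lt; have [_ nontrunc_s] := coef_pair_poly_pow2_val s_lt.
have tau_gt i : (s < i)%N -> (tau s + 4 <= tau i)%N.
  by move=> s_lt_i; have := tau_incr (ltnW s_lt_i); lia.
rewrite coef_rising_poly_pow2 [X in X + _]addrC -addrA; apply: has_valD => //.
  exact: has_valM (has_val_triple_pow2 p) (has_val_coef_paired_part s_lt).
apply: rpredD.
  case: s s_lt nontrunc_s tau_gt => [|t] t_lt nontrunc tau_gt; first by rewrite dvdz0.
  have -> : ((2 * t.+1).+1 < 2)%N = false by rewrite mulnS.
  rewrite (_ : (2 * t.+1).+1 - 2 = (2 * t).+1)%N; last by rewrite mulnS.
  apply: (@dvdz_coef_paired_part p (2 * t).+1 (p + pair_val p t.+1).+1) => i _ /andP [_ m_le].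
  have := tau_incr (_ : t.+1 <= i)%N; rewrite /pair_val; lia.
apply: (@dvdz_expW 2 _ ((2 * p).+1 + (pair_val p s - p))); first lia.
apply: dvdz_expM; first exact: dvdz_exp_val (has_val_double_pow4 p) (leqnn _).
apply: dvdz_coef_paired_part => i _ /andP [_ m_le].
have := tau_gt i; rewrite /pair_val; lia.
Qed.

Lemma has_val_coef_rising_even p s : (s < 2 ^ p)%N ->
  has_val 2 (pair_val p s) (rising_poly (2 ^ p.+1))`_(2 * s).+2.
Proof.
move=> s_lt; have [_ nontrunc_s] := coef_pair_poly_pow2_val s_lt.
have tau_gt i : (s < i)%N -> (tau s + 4 <= tau i)%N.
  by move=> s_lt_i; have := tau_incr (ltnW s_lt_i); lia.
rewrite coef_rising_poly_pow2 -addrA subn2 /=.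
apply: has_valD => //; first exact: has_val_coef_paired_part.
apply: rpredD.
  apply: (@dvdz_expW 2 _ (p + ((pair_val p s).+1 - p))); first lia.
  apply: dvdz_expM; first exact: dvdz_exp_val (has_val_triple_pow2 p) (leqnn _).
  apply: (@dvdz_coef_paired_part p (2 * s).+1) => i _ /andP [_ m_le].
  have := tau_gt i; rewrite /pair_val; lia.
apply: (@dvdz_expW 2 _ ((2 * p).+1 + (pair_val p s - 2 * p))); first lia.
apply: dvdz_expM; first exact: dvdz_exp_val (has_val_double_pow4 p) (leqnn _).
apply: (@dvdz_coef_paired_part p (2 * s).+2) => i _ /andP [_ m_le].
have := tau_gt i; rewrite /pair_val; lia.
Qed.

Definition harmonic_gen_poly (N : nat) : {poly rat} :=
  \prod_(i < N) ((i.+1%:R)^-1%:P * 'X + 1).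

Lemma coef_harmonic_gen_poly N k : (harmonic_gen_poly N)`_k = H N k.
Proof.
rewrite /harmonic_gen_poly bigA_distr coef_sum /H [RHS]big_mkcond /=.
apply: eq_bigr => A _; rewrite -big_mkcond /= big_split /= prodr_const -rmorph_prod /=.
by rewrite coefCM coefXn eq_sym; case: eqP; rewrite ?mulr1 ?mulr0.
Qed.

Lemma harmonic_gen_poly_rising N : harmonic_gen_poly N =
  (\prod_(i < N) (i.+1%:R)^-1)%:P * map_poly intr (rising_poly N).
Proof.
rewrite /rising_poly rmorph_prod rmorph_prod -big_split /=; apply: eq_bigr => i _.
by rewrite map_polyXaddC rmorph_nat mulrDr -polyCM mulVf ?polyC1 // pnatr_eq0.
Qed.

Lemma H_rising_ratio N k :
  H N k = ((rising_poly N)`_k)%:~R / ((rising_poly N)`_0)%:~R.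
Proof.
have coef0 : (harmonic_gen_poly N)`_0 = 1.
  rewrite -horner_coef0 horner_prod; apply: big1 => i _.
  by rewrite hornerD hornerMX hornerC mulr0 add0r hornerC.
rewrite harmonic_gen_poly_rising coefCM coef_map /= in coef0.
rewrite -coef_harmonic_gen_poly harmonic_gen_poly_rising coefCM coef_map /=.
have D0_neq0 : ((rising_poly N)`_0)%:~R != 0 :> rat.
  by apply: contra_eq_neq coef0 => ->; rewrite mulr0 eq_sym oner_neq0.
by rewrite -[\prod_(i < N) _](mulfK D0_neq0) coef0 mul1r mulrC.
Qed.

Lemma v2_ratio (a b : int) : a != 0 -> b != 0 ->
  v2 (a%:~R / b%:~R) = (zlogn 2 a)%:Z - (zlogn 2 b)%:Z.
Proof.
move=> a0 b0; set x : rat := a%:~R / b%:~R.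
have b0R : (b%:~R : rat) != 0 by rewrite intr_eq0.
have x0 : x != 0 by rewrite mulf_neq0 ?invr_eq0 // intr_eq0.
have cross : numq x * b = a * denq x.
  apply: (@intr_inj rat); rewrite !rmorphM /= numqE /x.
  by rewrite -mulrA (mulrC _ b%:~R) mulrA mulrVK // mulrC.
have num0 : numq x != 0 by rewrite numq_eq0.
have := congr1 (zlogn 2) cross; rewrite /zlogn !abszM !lognM ?absz_gt0 ?denq_neq0 //.
rewrite /v2; lia.
Qed.

Lemma coef_rising_pow2_val_le p k : (0 < k)%N -> (k <= 2 ^ p.+1)%N ->
  exists2 e, has_val 2 e (rising_poly (2 ^ p.+1))`_k & (e + p.+1 <= 2 ^ p.+1 - 1)%N.
Proof.
move=> k_gt0 k_le; set s := (k.-1)./2.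
have s_lt : (s < 2 ^ p)%N by rewrite /s expnS in k_le *; lia.
have tau_s := tau_le s_lt; have [_ nontrunc_s] := coef_pair_poly_pow2_val s_lt.
have [k_eq|k_eq] : k = (2 * s).+1 \/ k = (2 * s).+2 by rewrite /s; lia.
  exists (p + pair_val p s)%N; first by rewrite k_eq; apply: has_val_coef_rising_odd.
  by rewrite /pair_val; lia.
exists (pair_val p s); first by rewrite k_eq; apply: has_val_coef_rising_even.
by rewrite /pair_val; lia.
Qed.

Theorem corollary1p5 (n k : nat) :
  (0 < n)%N -> (0 < k)%N -> (k <= 2 ^ n)%N ->
  v2 (H (2 ^ n) k) <= - (n%:Z).
Proof.
case: n => [|p] // _ k_gt0 k_le.
have [e [Dk_neq0 val_k] e_le] := coef_rising_pow2_val_le k_gt0 k_le.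
have [D0_neq0 val_0] := has_val_coef0_rising p.
by rewrite H_rising_ratio v2_ratio // val_k val_0; lia.
Qed.
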